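(* For all $n\ge1$, the number of permutations in $\mathcal{S}_n$ avoiding each of $1243$, $2143$ and $321$ equals $n+2\binom{n}{3}$.
   Context: A permutation $\pi\in\mathcal{S}_n$ avoids $\tau\in\mathcal{S}_k$ if there are no indices $i_1<\dots<i_k$ with $\pi_{i_1}\cdots\pi_{i_k}$ in the same relative order as $\tau_1\cdots\tau_k$. *)

From mathcomp Require Import all_boot all_order all_fingroup.
Set Implicit Arguments. Unset Strict Implicit. Unset Printing Implicit Defensive.

(* A pattern tau in S_k is given in one-line notation as a sequence of
   naturals (e.g. [:: 1; 2; 4; 3] for 1243).
   pi : 'S_n (acting on {0,..,n-1}; its one-line notation is pi 0, ..., pi (n-1))
   contains tau if there are indices i_1 < ... < i_k (a strictly increasing
   map f : 'I_k -> 'I_n) with pi(i_a) < pi(i_b) <-> tau_a < tau_b for all a, b. *)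
Definition contains (n : nat) (pi : 'S_n) (tau : seq nat) : bool :=
  [exists f : {ffun 'I_(size tau) -> 'I_n},
     [forall a : 'I_(size tau), forall b : 'I_(size tau),
        ((a < b)%N ==> (f a < f b)%N) &&
        ((pi (f a) < pi (f b))%N == (nth 0 tau a < nth 0 tau b)%N)]].

Definition avoids (n : nat) (pi : 'S_n) (tau : seq nat) : bool :=
  ~~ contains pi tau.

From mathcomp Require Import all_boot all_order all_fingroup.
From mathcomp Require Import zify.
Set Implicit Arguments. Unset Strict Implicit. Unset Printing Implicit Defensive.

(* Write a permutation of {0, ..., n-1} avoiding 321, 1243 and 2143 in one-line
   notation as x :: y :: t and call an entry of t large if it exceeds
   M = max(x, y), small otherwise.  The large entries of t increase (a descent
   among them would give 1243 or 2143 together with x and y) and so do the small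
   ones (a descent would give 321 together with M).  Hence the permutation is
   determined by x, y and the word recording which entries of t are large
   ([true]) or small ([false]).
   Moreover y < x forces y = 0, and the word avoids the subsequence
   small-large-small, or only small-large-small preceded by another small when
   x = y - 1; conversely every such data decodes to an avoider.  Counting these
   words for each M and summing over M gives n + 2 'C(n, 3). *)

Section Shuffle.
Variable T : eqType.

Fixpoint shuffle (w : bitseq) (L S : seq T) : seq T :=
  match w, L, S with
  | true :: w', x :: L', _ => x :: shuffle w' L' S
  | false :: w', _, x :: S' => x :: shuffle w' L S'
  | _, _, _ => [::]
  end.

Lemma shuffle_filter (P : pred T) t : shuffle (map P t) (filter P t) (filter (predC P) t) = t.
Proof. by elim: t => //= x t IH; case: (P x) => /=; rewrite IH. Qed.

Lemma shuffleK (P : pred T) w L S :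
  count_mem true w = size L -> count_mem false w = size S -> all P L -> all (predC P) S ->
  [/\ map P (shuffle w L S) = w, filter P (shuffle w L S) = L
    & filter (predC P) (shuffle w L S) = S].
Proof.
elim: w L S => [|[] w IH] L S /=.
- by case: L => [|? ?] //; case: S.
- case: L => [|x L] //= [sL] sS /andP [Px aL] aS.
  by have [-> -> ->] := IH L S sL sS aL aS; rewrite Px.
- case: S => [|y S] //= sL [sS] aL /andP [Py aS].
  by have [-> -> ->] := IH L S sL sS aL aS; rewrite (negbTE Py).
Qed.
End Shuffle.

Lemma subseq_iota ps n : subseq ps (iota 0 n) = pairwise ltn ps && all (gtn n) ps.
Proof.
apply/idP/andP => [sub | [lt_ps lt_n]].
  split; last by apply/allP => i /(mem_subseq sub); rewrite mem_iota.
  by apply: subseq_pairwise sub _; rewrite -sorted_pairwise ?iota_ltn_sorted //; exact: ltn_trans.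
suff -> : ps = filter (mem ps) (iota 0 n) by apply: filter_subseq.
apply: (irr_sorted_eq ltn_trans ltnn); first exact: pairwise_sorted.
  by apply: sorted_filter; [exact: ltn_trans | exact: iota_ltn_sorted].
move=> i; rewrite mem_filter mem_iota /=.
by case: (boolP (i \in ps)) => // /(allP lt_n).
Qed.

Lemma subseq_nthP (T : eqType) (x0 : T) (p w : seq T) :
  reflect (exists2 ps, subseq ps (iota 0 (size w)) & p = [seq nth x0 w i | i <- ps])
          (subseq p w).
Proof.
apply: (iffP idP) => [/subseqP [m sz_m ->] | [ps sub ->]].
  by exists (mask m (iota 0 (size w))); rewrite ?mask_subseq // map_mask -/(mkseq _ _) mkseq_nth.
by rewrite -[in X in subseq _ X](mkseq_nth x0 w); apply: map_subseq.
Qed.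

Lemma pairwise_filterE (T : Type) (r : rel T) (P : pred T) t :
  pairwise r (filter P t) = pairwise (fun a b => P a ==> P b ==> r a b) t.
Proof.
elim: t => //= a t IH; case: (P a) => /=; rewrite IH ?all_filter //.
by rewrite (@eq_all _ _ predT) ?all_predT.
Qed.

Lemma sorted_filterP (P : pred nat) t :
  reflect (forall i j, i < j -> j < size t -> P (nth 0 t i) -> P (nth 0 t j) ->
             nth 0 t i < nth 0 t j)
          (sorted ltn (filter P t)).
Proof.
rewrite sorted_pairwise; last exact: ltn_trans.
rewrite pairwise_filterE; apply: (iffP (pairwiseP 0)) => incr i j.
  move=> lt_ij lt_j Pi Pj; have := incr i j; rewrite !inE Pi Pj /=.
  by apply=> //; apply: ltn_trans lt_j.
by rewrite !inE => lt_i lt_j lt_ij; apply/implyP => Pi; apply/implyP; apply: incr.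
Qed.

Lemma cons_inj (T : Type) (x : T) : injective (cons x).
Proof. by move=> ? ? []. Qed.

Fixpoint bitseqs k : seq bitseq :=
  if k is k'.+1 then [seq true :: w | w <- bitseqs k'] ++ [seq false :: w | w <- bitseqs k']
  else [:: [::]].

Lemma mem_bitseqs k w : (w \in bitseqs k) = (size w == k).
Proof.
elim: k w => [|k IH] [|b w] //=; rewrite mem_cat.
  by apply/negbTE; rewrite negb_or; apply/andP; split; apply/mapP => -[].
have [in_t in_f] : (true :: w \in [seq false :: v | v <- bitseqs k]) = false /\
                   (false :: w \in [seq true :: v | v <- bitseqs k]) = false.
  by split; apply/negbTE/mapP => -[].
by case: b; rewrite ?in_t ?in_f ?orbF (mem_map (@cons_inj _ _)) IH.
Qed.

Lemma uniq_bitseqs k : uniq (bitseqs k).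
Proof.
elim: k => //= k IH; rewrite cat_uniq !(map_inj_uniq (@cons_inj _ _)) IH /= andbT.
by apply/hasPn => _ /mapP [w _ ->]; apply/mapP => -[].
Qed.

Definition n_avoiding (p : bitseq) k a :=
  count (fun w => (count_mem false w == a) && ~~ subseq p w) (bitseqs k).

Lemma n_avoiding_nil k a : n_avoiding [::] k a = 0.
Proof. by apply/eqP; rewrite eqn0Ngt -has_count; apply/hasPn => w _; rewrite sub0seq andbF. Qed.

Lemma n_avoiding0 p a : p != [::] -> n_avoiding p 0 a = (a == 0).
Proof. by case: p => //= c p _; rewrite /n_avoiding /= addn0 eq_sym; case: (a == 0). Qed.

Lemma n_avoidingS c p k a :
  n_avoiding (c :: p) k.+1 a =
    n_avoiding (if c then p else c :: p) k a +
    (if a is a'.+1 then n_avoiding (if c then c :: p else p) k a' else 0).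
Proof.
rewrite /n_avoiding /= count_cat !count_map; congr (_ + _).
  by apply: eq_count => w /=; case: c.
case: a => [|a].
  by apply/eqP; rewrite eqn0Ngt -has_count; apply/hasPn => w _ /=.
by apply: eq_count => w /=; rewrite add1n eqSS; case: c.
Qed.

Definition sls : bitseq := [:: false; true; false].
Definition ssls : bitseq := [:: false; false; true; false].

Lemma n_avoiding_s k a : n_avoiding [:: false] k a = (a == 0).
Proof.
elim: k a => [|k IH] a; first exact: n_avoiding0.
by rewrite n_avoidingS IH; case: a => [|a] //=; rewrite n_avoiding_nil.
Qed.

Lemma n_avoiding_ls k a : n_avoiding [:: true; false] k a = (a <= k).
Proof.
elim: k a => [|k IH] a; first by rewrite n_avoiding0 //; case: a.
by rewrite n_avoidingS n_avoiding_s; case: a => [|a] //=; rewrite IH.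
Qed.

Lemma n_avoiding_sls k a : n_avoiding sls k a = if a == 0 then 1 else k.+1 - a.
Proof.
elim: k a => [|k IH] a; first by rewrite n_avoiding0 //; case: a => [|[|a]].
rewrite n_avoidingS IH; case: a => [|a] //=; rewrite n_avoiding_ls; lia.
Qed.

Lemma n_avoiding_ssls k a :
  n_avoiding ssls k a = if a == 0 then 1 else if a == 1 then k else 'C(k.+2 - a, 2).
Proof.
elim: k a => [|k IH] a; first by rewrite n_avoiding0 //; case: a => [|[|[|a]]].
rewrite n_avoidingS IH; case: a => [|[|a]] //=; rewrite n_avoiding_sls /=; first lia.
rewrite !subSS; have [le_ak|lt_ka] := leqP a k; first by rewrite subSn // binS bin1.
by rewrite (eqP lt_ka) (eqP (ltnW lt_ka)).
Qed.

Definition avoids321_seq (s : seq nat) :=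
  forall i j k, i < j -> j < k -> k < size s -> ~~ (nth 0 s k < nth 0 s j < nth 0 s i).

Definition avoids1243_2143_seq (s : seq nat) :=
  forall i j k l, i < j -> j < k -> k < l -> l < size s ->
    ~~ [&& nth 0 s i < nth 0 s l, nth 0 s j < nth 0 s l & nth 0 s l < nth 0 s k].

Definition valid_pair n x y := [&& 0 < maxn x y, maxn x y < n & (y == 0) || (x < y)].
Definition larges n x y := iota (maxn x y).+1 (n - (maxn x y).+1).
Definition smalls x y := [seq v <- iota 0 (maxn x y) | v != minn x y].
Definition forbidden x y := if x.+1 == y then ssls else sls.
Definition decode n x y w := x :: y :: shuffle w (larges n x y) (smalls x y).
Definition code n x y w := [&& valid_pair n x y, size w == n - 2,
  count_mem false w == (maxn x y).-1 & ~~ subseq (forbidden x y) w].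

Lemma mem_larges n x y v : (v \in larges n x y) = (maxn x y < v < n).
Proof. by rewrite mem_iota; case: ltnP => //= lt_Mv; lia. Qed.

Lemma mem_smalls x y v : (v \in smalls x y) = (v < maxn x y) && (v != minn x y).
Proof. by rewrite mem_filter mem_iota andbC. Qed.

Lemma size_smalls x y : x != y -> size (smalls x y) = (maxn x y).-1.
Proof.
move=> neq_xy; rewrite /smalls -rem_filter ?iota_uniq // size_rem ?size_iota //.
by rewrite mem_iota; lia.
Qed.

Lemma count_mem_true (w : bitseq) : count_mem true w = size w - count_mem false w.
Proof. by rewrite -(count_predC (pred1 false)) addKn; apply: eq_count => -[]. Qed.

Section Decode.
Variables (n x y : nat) (w : bitseq).
Hypothesis code_w : code n x y w.
Local Notation M := (maxn x y).
Local Notation large := (fun v => maxn x y < v).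
Local Notation t := (shuffle w (larges n x y) (smalls x y)).

Let valid : [&& 0 < M, M < n & (y == 0) || (x < y)]. Proof. by case/and4P: code_w. Qed.

Lemma decode_tail_split : [/\ map large t = w, filter large t = larges n x y
  & filter (predC large) t = smalls x y].
Proof.
case/and4P: code_w => _ /eqP sz_w /eqP cnt_w _; apply: shuffleK.
- by rewrite count_mem_true sz_w cnt_w size_iota; lia.
- by rewrite size_smalls //; lia.
- by apply/allP => v; rewrite mem_larges => /andP [].
- by apply/allP => v; rewrite mem_smalls /= -leqNgt => /andP [/ltnW].
Qed.

Lemma perm_decode_tail : perm_eq t (larges n x y ++ smalls x y).
Proof.
have [_ tL tS] := decode_tail_split.
by have /permPl := perm_filterC large t; rewrite tL tS perm_sym.
Qed.

Lemma mem_decode_tail v : (v \in t) = (M < v < n) || (v < M) && (v != minn x y).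
Proof. by rewrite (perm_mem perm_decode_tail) mem_cat mem_larges mem_smalls. Qed.

Lemma size_decode_tail : size t = n - 2.
Proof.
have [e _ _] := decode_tail_split; case/and4P: code_w => _ /eqP sz_w _ _.
by rewrite -sz_w -[in RHS]e size_map.
Qed.

Lemma uniq_decode_tail : uniq t.
Proof.
rewrite (perm_uniq perm_decode_tail) cat_uniq iota_uniq filter_uniq ?iota_uniq //=.
by rewrite andbT; apply/hasPn => v; rewrite mem_smalls mem_larges; lia.
Qed.

Lemma decode_perm_eq : perm_eq (decode n x y w) (iota 0 n).
Proof.
apply: uniq_perm; rewrite ?iota_uniq //=.
  by rewrite uniq_decode_tail !inE !mem_decode_tail andbT; lia.
by move=> v; rewrite !inE mem_decode_tail mem_iota; lia.
Qed.

Lemma nth_decode_word q : q < n - 2 -> nth false w q = (M < nth 0 t q).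
Proof.
rewrite -size_decode_tail => lt_q; have [e _ _] := decode_tail_split.
by rewrite -[in LHS]e (nth_map 0).
Qed.

Lemma decode_tail_inversion q q' : q < q' -> q' < n - 2 -> nth 0 t q' < nth 0 t q ->
  M < nth 0 t q /\ nth 0 t q' < M.
Proof.
rewrite -size_decode_tail => lt_qq' lt_q' inv; have [_ tL tS] := decode_tail_split.
have /sorted_filterP incrL : sorted ltn (filter large t) by rewrite tL iota_ltn_sorted.
have /sorted_filterP incrS : sorted ltn (filter (predC large) t).
  by rewrite tS; apply: sorted_filter; [exact: ltn_trans | exact: iota_ltn_sorted].
have := incrL _ _ lt_qq' lt_q'; have := incrS _ _ lt_qq' lt_q'.
have := mem_decode_tail (nth 0 t q'); rewrite mem_nth // => /esym.
rewrite /=; lia.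
Qed.

Lemma decode_avoids321 : avoids321_seq (decode n x y w).
Proof.
move=> i j k lt_ij lt_jk lt_k.
case: k lt_jk lt_k => [|[|k]] lt_jk lt_k; try lia.
have {}lt_k : k < n - 2 by rewrite -size_decode_tail.
case: j lt_ij lt_jk => [|[|j]] lt_ij lt_jk; first lia.
  by case: i lt_ij => // _ /=; lia.
have {}lt_jk : j < k := lt_jk.
apply/negP => /andP [/= inv_jk inv_ij].
have [Mj _] := decode_tail_inversion lt_jk lt_k inv_jk.
case: i lt_ij inv_ij => [|[|i]] lt_ij /= inv_ij; try lia.
by have [] := decode_tail_inversion (lt_ij : i < j) (ltn_trans lt_jk lt_k) inv_ij; lia.
Qed.

Lemma decode_avoids1243_2143 : avoids1243_2143_seq (decode n x y w).
Proof.
move=> i j k l lt_ij lt_jk lt_kl lt_l.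
case: k lt_jk lt_kl => [|[|k]] lt_jk lt_kl; try lia.
case: l lt_kl lt_l => [|[|l]] lt_kl lt_l; try lia.
have {}lt_l : l < n - 2 by rewrite -size_decode_tail.
have {}lt_kl : k < l := lt_kl.
apply/negP => /and3P [il jl /= lk].
have [Mk lM] := decode_tail_inversion lt_kl lt_l lk.
case: j lt_ij lt_jk jl => [|[|j]] lt_ij lt_jk /= jl; first lia.
  by case: i lt_ij il => // _ /= il; lia.
have {}lt_jk : j < k := lt_jk.
have word_l : (M < nth 0 t l) = false by lia.
have word_j : (M < nth 0 t j) = false by lia.
have pos_w ps : all (gtn l.+1) ps -> pairwise ltn ps -> subseq ps (iota 0 (size w)).
  case/and4P: code_w => _ /eqP -> _ _ lt_ps incr_ps; rewrite subseq_iota incr_ps /=.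
  by apply: sub_all lt_ps => q /= lt_q; apply: leq_trans lt_l.
have sls_w : subseq sls w.
  apply/(subseq_nthP false); exists [:: j; k; l]; first by apply: pos_w => /=; lia.
  by rewrite /= !nth_decode_word ?word_j ?Mk ?word_l //; lia.
case/and4P: code_w => _ _ _; rewrite /forbidden; case: eqP => [xy | _]; last by rewrite sls_w.
case: i lt_ij il => [|[|i]] lt_ij /= il; try lia.
have {}lt_ij : i < j := lt_ij.
have word_i : (M < nth 0 t i) = false by lia.
apply/negP/negPn/(subseq_nthP false); exists [:: i; j; k; l]; first by apply: pos_w => /=; lia.
by rewrite /= !nth_decode_word ?word_i ?word_j ?Mk ?word_l //; lia.
Qed.

End Decode.

Section Encode.
Variables (n x y : nat) (t : seq nat).
Hypothesis perm_s : perm_eq (x :: y :: t) (iota 0 n).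
Hypothesis no321 : avoids321_seq (x :: y :: t).
Hypothesis no1243_2143 : avoids1243_2143_seq (x :: y :: t).
Local Notation M := (maxn x y).
Local Notation large := (fun v => maxn x y < v).

Lemma size_tail : size t = n - 2.
Proof. by have := perm_size perm_s; rewrite size_iota /= => <-; rewrite subn2. Qed.

Lemma uniq_head_tail : [&& x != y, x \notin t, y \notin t & uniq t].
Proof. by have := perm_uniq perm_s; rewrite iota_uniq /= inE negb_or -andbA => ->. Qed.

Lemma mem_tail v : (v \in t) = [&& v < n, v != x & v != y].
Proof.
have := perm_mem perm_s v; rewrite !inE mem_iota /= => <-.
case/and4P: uniq_head_tail => _ xt yt _.
have [-> | _] := eqVneq v x; first by rewrite (negbTE xt) andbF.
by have [-> | _] := eqVneq v y; rewrite ?(negbTE yt) ?andbF //= andbT.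
Qed.

Lemma nth_tail q : q < size t -> [&& nth 0 t q < n, nth 0 t q != x & nth 0 t q != y].
Proof. by move=> lt_q; rewrite -mem_tail mem_nth. Qed.

Lemma nth_tail_inj q q' : q < size t -> q' < size t -> (nth 0 t q == nth 0 t q') = (q == q').
Proof. by move=> lt_q lt_q'; rewrite nth_uniq //; case/and4P: uniq_head_tail. Qed.

Lemma head_lt : (x < n) && (y < n).
Proof.
have lt_n v : v \in x :: y :: t -> v < n by rewrite (perm_mem perm_s) mem_iota.
by rewrite !lt_n // !inE eqxx ?orbT.
Qed.

Lemma valid_pair_head : valid_pair n x y.
Proof.
case/and4P: uniq_head_tail => neq_xy _ _ _; have /andP [lt_x lt_y] := head_lt.
rewrite /valid_pair.
have [lt_yx | ] := ltnP y x; last by lia.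
case: (posnP y) => [-> | pos_y]; first by lia.
have t0 : 0 \in t by rewrite mem_tail; lia.
have lt_q : index 0 t < size t by rewrite index_mem.
have := no321 (i := 0) (j := 1) (k := (index 0 t).+2) isT isT lt_q.
by rewrite /= nth_index //; lia.
Qed.

Lemma sorted_large_tail : sorted ltn (filter large t).
Proof.
apply/sorted_filterP => q q' lt_qq' lt_q' /= Lq Lq'; have lt_q := ltn_trans lt_qq' lt_q'.
have := nth_tail_inj lt_q lt_q'; have := nth_tail lt_q; have := nth_tail lt_q'.
have := no1243_2143 (i := 0) (j := 1) (k := q.+2) (l := q'.+2) isT isT lt_qq' lt_q'.
by rewrite /=; lia.
Qed.

Lemma sorted_small_tail : sorted ltn (filter (predC large) t).
Proof.
apply/sorted_filterP => q q' lt_qq' lt_q' /= Sq Sq'; have lt_q := ltn_trans lt_qq' lt_q'.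
have := nth_tail_inj lt_q lt_q'; have := nth_tail lt_q; have := nth_tail lt_q'.
have := no321 (i := 0) (j := q.+2) (k := q'.+2) isT lt_qq' lt_q'.
by have := no321 (i := 1) (j := q.+2) (k := q'.+2) isT lt_qq' lt_q' => /=; lia.
Qed.

Lemma filter_large_tail : filter large t = larges n x y.
Proof.
apply: (irr_sorted_eq ltn_trans ltnn sorted_large_tail (iota_ltn_sorted _ _)) => v.
by rewrite mem_filter mem_tail mem_larges /=; lia.
Qed.

Lemma filter_small_tail : filter (predC large) t = smalls x y.
Proof.
have sorted_smalls : sorted ltn (smalls x y).
  by apply: sorted_filter; [exact: ltn_trans | exact: iota_ltn_sorted].
apply: (irr_sorted_eq ltn_trans ltnn sorted_small_tail sorted_smalls) => v.
by have := head_lt; rewrite mem_filter mem_tail mem_smalls /=; lia.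
Qed.

Lemma subseq_tail_word p : subseq p (map large t) ->
  exists2 ps, subseq ps (iota 0 (size t)) & p = [seq large (nth 0 t q) | q <- ps].
Proof.
case/(subseq_nthP false) => ps; rewrite size_map => sub ->; exists ps => //.
by apply/eq_in_map => q /(mem_subseq sub); rewrite mem_iota => lt_q; apply: nth_map.
Qed.

Lemma tail_word_avoids_ssls : ~~ subseq ssls (map large t).
Proof.
apply/negP => /subseq_tail_word [[|i [|j [|k [|l []]]]] //].
rewrite subseq_iota /= => pos [Si Sj Lk Sl].
have /sorted_filterP incr := sorted_small_tail.
have il : nth 0 t i < nth 0 t l by apply: incr; rewrite /= -?Si -?Sl //; lia.
have jl : nth 0 t j < nth 0 t l by apply: incr; rewrite /= -?Sj -?Sl //; lia.
by apply: (elimT negP (no1243_2143 (i := i.+2) (j := j.+2) (k := k.+2) (l := l.+2) _ _ _ _));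
  rewrite /= ?il ?jl; lia.
Qed.

Lemma tail_word_avoids_sls : x.+1 != y -> ~~ subseq sls (map large t).
Proof.
move=> not_succ; apply/negP => /subseq_tail_word [[|r [|k [|l []]]] //].
rewrite subseq_iota /= => pos [Sr Lk Sl].
have /sorted_filterP incr := sorted_small_tail.
have rl : nth 0 t r < nth 0 t l by apply: incr; rewrite /= -?Sr -?Sl //; lia.
have lt_l : l < size t by lia.
have t_l := nth_tail lt_l; have := valid_pair_head; rewrite /valid_pair => valid.
have [lt_yx | lt_xy] := ltnP y x.
  by apply: (elimT negP (no1243_2143 (i := 1) (j := r.+2) (k := k.+2) (l := l.+2) _ _ _ _));
    rewrite /= ?rl; lia.
(* Now x < y - 1, so y - 1 is a small entry of t.  After the large entry it
   would complete x, the first small entry and the large one to a 1243 or a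
   2143; before it, it would exceed the last small entry, which comes later. *)
have ty : y.-1 \in t by rewrite mem_tail; lia.
have lt_q : index y.-1 t < size t by rewrite index_mem.
have tq := nth_index 0 ty; set q := index y.-1 t in lt_q tq.
have [lt_kq | le_qk] := ltnP k q.
  have lt_r : r < size t by lia.
  have t_rq := nth_tail_inj lt_r lt_q; have t_r := nth_tail lt_r.
  by apply: (elimT negP (no1243_2143 (i := 0) (j := r.+2) (k := k.+2) (l := q.+2) _ _ _ _));
    rewrite /= ?tq; lia.
have lt_qk : q < k.
  by rewrite ltn_neqAle le_qk andbT; apply/eqP => qk; move: Lk; rewrite -qk tq; lia.
by have := incr q l; rewrite /= tq -Sl; lia.
Qed.

Lemma code_tail_word : code n x y (map large t).
Proof.
have [neq_xy _ _ _] := and4P uniq_head_tail.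
rewrite /code valid_pair_head size_map size_tail eqxx count_map.
have -> : count (preim large (pred1 false)) t = size (filter (predC large) t).
  by rewrite size_filter; apply: eq_count => v /=; case: (M < v).
rewrite filter_small_tail size_smalls // eqxx /forbidden.
case: eqP => /= [_ | /eqP ne]; [exact: tail_word_avoids_ssls | exact: tail_word_avoids_sls].
Qed.

Lemma decode_tail_word : decode n x y (map large t) = x :: y :: t.
Proof. by rewrite /decode -filter_large_tail -filter_small_tail shuffle_filter. Qed.

End Encode.

Lemma decode_surj n s : 2 <= n -> perm_eq s (iota 0 n) ->
  avoids321_seq s -> avoids1243_2143_seq s -> exists x y w, code n x y w /\ decode n x y w = s.
Proof.
move=> le2n perm_s; have := perm_size perm_s; rewrite size_iota.
case: s perm_s => [|x [|y t]] perm_s /= sz_s no321 no1243_2143; try lia.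
by exists x, y, (map (fun v => maxn x y < v) t); rewrite code_tail_word ?decode_tail_word.
Qed.

(* Of the M + 1 pairs with maximum M, all but (M - 1, M) forbid [sls] and
   (M - 1, M) forbids [ssls]; their words have M - 1 small letters. *)
Definition count_max k M := M * n_avoiding sls k M.-1 + n_avoiding ssls k M.-1.

Lemma count_maxS k M : 0 < M <= k.+1 ->
  count_max k.+1 M = count_max k M + (if M == 1 then 0 else if M == 2 then 3 else k + 3).
Proof.
rewrite /count_max !n_avoiding_sls !n_avoiding_ssls.
case: M => [|[|[|M]]] //= le_Mk; first lia.
rewrite !subSS subSn; last lia.
rewrite binS bin1; nia.
Qed.

Lemma sum_count_max k : \sum_(1 <= M < k.+2) count_max k M = k.+2 + 2 * 'C(k.+2, 3).
Proof.
elim: k => [|k IH]; first by rewrite big_nat1.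
rewrite big_nat_recr //=.
under eq_big_nat => M le_M do rewrite count_maxS //.
rewrite big_split /= IH.
case: k {IH} => [|k]; first by rewrite big_nat1.
rewrite 2?big_ltn // (eq_big_nat _ _ (F2 := fun=> k.+1 + 3)); last first.
  by move=> [|[|[|M]]].
rewrite sum_nat_const_nat /count_max !n_avoiding_sls !n_avoiding_ssls /=.
rewrite [in RHS]binS [in RHS]mulnDr (mul_bin_left _ 1) bin1.
have -> : k.+4 - k.+2 = 2 by lia.
rewrite binn; nia.
Qed.

Lemma decode_inj n x y w w' : code n x y w -> code n x y w' ->
  decode n x y w = decode n x y w' -> w = w'.
Proof.
move=> code_w code_w' [e].
by have [<- _ _] := decode_tail_split code_w; have [<- _ _] := decode_tail_split code_w'; rewrite e.
Qed.

Definition pairs_of_max M := (M, 0) :: [seq (x, M) | x <- iota 0 M].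
Definition pairs n := [seq p | M <- index_iota 1 n, p <- pairs_of_max M].
Definition code_words n (p : nat * nat) := [seq w <- bitseqs (n - 2) | code n p.1 p.2 w].
Definition decodings n := [seq decode n p.1 p.2 w | p <- pairs n, w <- code_words n p].

Lemma mem_pairs n x y : ((x, y) \in pairs n) = valid_pair n x y.
Proof.
apply/allpairsPdep/idP => [[M [p [M_n p_M e]]] | valid].
  move: M_n p_M; rewrite -e mem_index_iota inE /valid_pair => lt_M /predU1P [[-> ->] | /mapP [z]].
    by lia.
  by rewrite mem_iota => lt_z [-> ->]; lia.
move: valid; rewrite /valid_pair; have [-> | nz_y] := eqVneq y 0 => valid.
  by exists x, (x, 0); rewrite mem_index_iota inE eqxx; split => //; lia.
exists y, (x, y); split=> //; first by rewrite mem_index_iota; lia.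
by rewrite inE map_f ?orbT // mem_iota; lia.
Qed.

Lemma max_pairs_of_max M p : p \in pairs_of_max M -> maxn p.1 p.2 = M.
Proof.
by rewrite inE => /predU1P [-> | /mapP [x]]; [exact: maxn0 | rewrite mem_iota => lt_x -> /=; lia].
Qed.

Lemma uniq_pairs n : uniq (pairs n).
Proof.
apply: allpairs_uniq_dep => [|M|]; first exact: iota_uniq.
  rewrite mem_index_iota /= map_inj_uniq ?iota_uniq ?andbT => [lt_M|? ? [] //].
  by apply/mapP => -[x _ [_ M0]]; lia.
move=> _ _ /allpairsPdep [M [p [_ pM ->]]] /allpairsPdep [M' [p' [_ pM' ->]]] /= e.
by move: pM'; rewrite -e => /max_pairs_of_max; rewrite (max_pairs_of_max pM) => ->.
Qed.

Lemma size_code_words n x y : valid_pair n x y ->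
  size (code_words n (x, y)) = n_avoiding (forbidden x y) (n - 2) (maxn x y).-1.
Proof.
move=> valid; rewrite size_filter; apply: eq_in_count => w.
by rewrite mem_bitseqs /code valid /= => ->.
Qed.

Lemma uniq_decodings n : uniq (decodings n).
Proof.
apply: allpairs_uniq_dep => [|p _|]; first exact: uniq_pairs.
  exact/filter_uniq/uniq_bitseqs.
move=> _ _ /allpairsPdep [[x y] [w [_ w_xy ->]]] /allpairsPdep [[x' y'] [w' [_ w'_xy' ->]]] /=.
move: w_xy w'_xy'; rewrite !mem_filter => /andP [code_w _] /andP [code_w' _] e.
by case: e (e) code_w' => <- <- _ e code_w'; rewrite (decode_inj code_w code_w' e).
Qed.

Lemma decodingsP n s :
  reflect (exists x y w, code n x y w /\ decode n x y w = s) (s \in decodings n).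
Proof.
apply: (iffP allpairsPdep) => [[[x y] [w [_ w_xy ->]]] | [x [y [w [code_w <-]]]]].
  by exists x, y, w; move: w_xy; rewrite mem_filter => /andP [].
exists (x, y), w; have [valid /eqP sz_w _ _] := and4P code_w.
by rewrite mem_pairs mem_filter /= code_w mem_bitseqs sz_w eqxx.
Qed.

Lemma sum_code_words_max n M : 0 < M < n ->
  \sum_(p <- pairs_of_max M) size (code_words n p) = count_max (n - 2) M.
Proof.
case: M => // M /= lt_M.
rewrite big_cons big_map size_code_words; last by rewrite /valid_pair; lia.
have -> : iota 0 M.+1 = index_iota 0 M.+1 by rewrite /index_iota subn0.
rewrite big_nat_recr //= size_code_words; last by rewrite /valid_pair; lia.
under eq_big_nat => x /andP [_ lt_x].
  rewrite size_code_words; last by rewrite /valid_pair; lia.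
  rewrite /forbidden eqSS (ltn_eqF lt_x) (maxn_idPr (ltnW (leqW lt_x))).
  over.
rewrite sum_nat_const_nat /forbidden /= eqxx (maxn_idPr (leqnSn M)) subn0.
by rewrite /count_max mulSn addnA.
Qed.

Lemma size_decodings n : size (decodings n) = \sum_(1 <= M < n) count_max (n - 2) M.
Proof.
rewrite size_allpairs_dep sumnE big_map big_allpairs_dep /=.
by apply: eq_big_nat => M; apply: sum_code_words_max.
Qed.

Section Oneline.
Variable n : nat.

Definition oneline (pi : 'S_n) : seq nat := [seq val (pi i) | i <- enum 'I_n].

Lemma size_oneline pi : size (oneline pi) = n.
Proof. by rewrite size_map size_enum_ord. Qed.

Lemma nth_oneline pi (i : 'I_n) : nth 0 (oneline pi) i = pi i.
Proof. by rewrite (nth_map i) ?size_enum_ord // nth_ord_enum. Qed.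

Lemma oneline_inj : injective oneline.
Proof. by move=> pi1 pi2 e; apply/permP => i; apply/val_inj; rewrite /= -!nth_oneline e. Qed.

Lemma perm_eq_oneline pi : perm_eq (oneline pi) (iota 0 n).
Proof.
rewrite -val_enum_ord /oneline -map_comp (map_comp val pi); apply: perm_map.
apply: uniq_perm; rewrite -?enumT ?(map_inj_uniq (@perm_inj _ pi)) ?enum_uniq //.
by move=> i; rewrite mem_enum; apply/mapP; exists (pi^-1 i)%g; rewrite ?mem_enum ?permKV.
Qed.

Lemma oneline_surj s : perm_eq s (iota 0 n) -> exists pi, oneline pi = s.
Proof.
move=> perm_s; have sz_s : size s = n by rewrite (perm_size perm_s) size_iota.
have lt_s (i : 'I_n) : nth 0 s i < n.
  by have := perm_mem perm_s (nth 0 s i); rewrite mem_iota mem_nth ?sz_s //= => /esym.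
have f_inj : injective (fun i : 'I_n => Ordinal (lt_s i)).
  move=> i j [] /eqP; rewrite nth_uniq ?sz_s // ?(perm_uniq perm_s) ?iota_uniq //.
  by move/eqP/val_inj.
exists (perm f_inj); apply: (@eq_from_nth _ 0); rewrite size_oneline ?sz_s // => q lt_q.
by rewrite -[q]/(val (Ordinal lt_q)) nth_oneline permE.
Qed.

Lemma containsP pi tau :
  reflect (exists2 ps, subseq ps (iota 0 n) /\ size ps = size tau &
             forall a b, a < size tau -> b < size tau ->
               (nth 0 (oneline pi) (nth 0 ps a) < nth 0 (oneline pi) (nth 0 ps b)) =
               (nth 0 tau a < nth 0 tau b))
          (contains pi tau).
Proof.
apply: (iffP existsP) => [[f /forallP f_pat] | [ps [sub_ps sz_ps] ps_pat]].
  have nth_ps (a : 'I_(size tau)) : nth 0 [seq val (f b) | b <- enum 'I_(size tau)] a = f a.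
    by rewrite (nth_map a) ?size_enum_ord // nth_ord_enum.
  exists [seq val (f b) | b <- enum 'I_(size tau)]; last first.
    move=> a b lt_a lt_b; have /andP [_ /eqP <-] := forallP (f_pat (Ordinal lt_a)) (Ordinal lt_b).
    by rewrite -[a]/(val (Ordinal lt_a)) -[b]/(val (Ordinal lt_b)) !nth_ps !nth_oneline.
  rewrite size_map size_enum_ord subseq_iota; split => //; apply/andP; split.
    apply/(pairwiseP 0) => a b; rewrite !inE size_map size_enum_ord => lt_a lt_b lt_ab.
    have /andP [/implyP incr _] := forallP (f_pat (Ordinal lt_a)) (Ordinal lt_b).
    by rewrite -[a]/(val (Ordinal lt_a)) -[b]/(val (Ordinal lt_b)) !nth_ps; apply: incr.
  by apply/allP => _ /mapP [a _ ->]; apply: ltn_ord.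
move: sub_ps; rewrite subseq_iota => /andP [/(pairwiseP 0) incr /allP lt_ps].
have lt_psn (a : 'I_(size tau)) : nth 0 ps a < n by apply: lt_ps; rewrite mem_nth ?sz_ps.
exists [ffun a => Ordinal (lt_psn a)]; apply/forallP => a; apply/forallP => b.
rewrite !ffunE /= -!nth_oneline /= ps_pat // eqxx andbT.
by apply/implyP => lt_ab; apply: incr; rewrite ?inE ?sz_ps.
Qed.

Lemma avoids321P pi : avoids pi [:: 3; 2; 1] <-> avoids321_seq (oneline pi).
Proof.
split => [av i j k lt_ij lt_jk | av].
  rewrite size_oneline => lt_k; apply/negP => /andP [kj ji]; case/negP: av; apply/containsP.
  exists [:: i; j; k]; first by rewrite subseq_iota /=; split => //; lia.
  by move=> [|[|[|a]]] [|[|[|b]]] //= _ _; lia.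
apply/negP => /containsP [ps [sub_ps sz_ps] pat].
case: ps sz_ps sub_ps pat => [|i [|j [|k []]]] // _; rewrite subseq_iota /= => pos pat.
have := pat 1 0 isT isT; have := pat 2 1 isT isT => /=.
by have := av i j k; rewrite size_oneline; lia.
Qed.

Lemma avoids1243_2143P pi :
  avoids pi [:: 1; 2; 4; 3] && avoids pi [:: 2; 1; 4; 3] <-> avoids1243_2143_seq (oneline pi).
Proof.
split => [/andP [av12 av21] i j k l lt_ij lt_jk lt_kl | av].
  rewrite size_oneline => lt_l; apply/negP => /and3P [il jl lk].
  have pos : subseq [:: i; j; k; l] (iota 0 n) by rewrite subseq_iota /=; lia.
  have [ij | ji] := ltnP (nth 0 (oneline pi) i) (nth 0 (oneline pi) j).
    case/negP: av12; apply/containsP; exists [:: i; j; k; l] => //.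
    by move=> [|[|[|[|a]]]] [|[|[|[|b]]]] //= _ _; lia.
  case/negP: av21; apply/containsP; exists [:: i; j; k; l] => //.
  have neq_ij : nth 0 (oneline pi) i != nth 0 (oneline pi) j.
    by rewrite nth_uniq ?size_oneline ?(perm_uniq (perm_eq_oneline pi)) ?iota_uniq //; lia.
  by move=> [|[|[|[|a]]]] [|[|[|[|b]]]] //= _ _; lia.
have no_pattern tau : nth 0 tau 0 < nth 0 tau 3 -> nth 0 tau 1 < nth 0 tau 3 ->
    nth 0 tau 3 < nth 0 tau 2 -> size tau = 4 -> avoids pi tau.
  move=> t03 t13 t32 sz_tau; apply/negP => /containsP [ps [sub_ps sz_ps] pat].
  rewrite sz_tau in sz_ps pat.
  case: ps sz_ps sub_ps pat => [|i [|j [|k [|l []]]]] // _; rewrite subseq_iota /= => pos pat.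
  have := pat 0 3 isT isT; have := pat 1 3 isT isT; have := pat 3 2 isT isT => /=.
  by have := av i j k l; rewrite size_oneline; lia.
by rewrite !no_pattern.
Qed.

End Oneline.

Lemma avoids_gt_size n (pi : 'S_n) tau : n < size tau -> avoids pi tau.
Proof.
move=> lt_n; apply/negP => /containsP [ps [/size_subseq + sz_ps] _].
by rewrite sz_ps size_iota leqNgt lt_n.
Qed.

Definition avoiders n := [set pi : 'S_n | [&& avoids pi [:: 1; 2; 4; 3],
                                              avoids pi [:: 2; 1; 4; 3] &
                                              avoids pi [:: 3; 2; 1]]].

Lemma mem_avoiders n (pi : 'S_n) :
  pi \in avoiders n <-> avoids321_seq (oneline pi) /\ avoids1243_2143_seq (oneline pi).
Proof.
rewrite inE andbA; split => [/andP [av43 av321] | [no321 no43]].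
  by split; [apply/avoids321P | apply/avoids1243_2143P].
by apply/andP; split; [apply/avoids1243_2143P | apply/avoids321P].
Qed.

Lemma card_avoiders n : 2 <= n -> #|avoiders n| = size (decodings n).
Proof.
move=> le2n; rewrite cardE -(size_map (@oneline n)); apply/perm_size/uniq_perm.
- by rewrite (map_inj_uniq (@oneline_inj n)) enum_uniq.
- exact: uniq_decodings.
move=> s; apply/mapP/decodingsP => [[pi] | [x [y [w [code_w <-]]]]].
  rewrite mem_enum => /mem_avoiders [no321 no1243_2143] ->.
  exact: decode_surj (perm_eq_oneline pi) no321 no1243_2143.
have [pi e] := oneline_surj (decode_perm_eq code_w).
exists pi => //; rewrite mem_enum; apply/mem_avoiders; rewrite e.
by split; [apply: decode_avoids321 | apply: decode_avoids1243_2143].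
Qed.

Theorem corollary3p10 (n : nat) : (1 <= n)%N ->
  #|[set pi : 'S_n | [&& avoids pi [:: 1; 2; 4; 3],
                         avoids pi [:: 2; 1; 4; 3] &
                         avoids pi [:: 3; 2; 1]]]| = n + 2 * 'C(n, 3).
Proof.
rewrite -/(avoiders n); case: n => [//|[_|k _]].
  have -> : avoiders 1 = [set: 'S_1].
    by apply/setP => pi; rewrite !inE !avoids_gt_size.
  by rewrite cardsT card_Sn.
by rewrite card_avoiders // size_decodings subn2 sum_count_max.
Qed.
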